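(* If $\delta$ is a positive real number with $\delta\le\inf_{0<\varepsilon<1}\Delta(\varepsilon)/\varepsilon^2$, then $R(g,n)\le\delta^{-1/2}\sqrt{gn}$ for all integers $n\ge g\ge1$.
   Context: A set $S$ of integers is a $B^*[g]$ set if for every integer $m$ there are at most $g$ ordered pairs $(s_1,s_2)\in S\times S$ with $s_1+s_2=m$. $R(g,n)$ is the maximum cardinality of a $B^*[g]$ set contained in $\{1,2,\dots,n\}$. Let $\lambda$ be Lebesgue measure; a set $C\subseteq\mathbb{R}$ is symmetric if there is $c$ with $c+x\in C\iff c-x\in C$; $D(A):=\sup\{\lambda(C): C\subseteq A \text{ measurable and symmetric}\}$, and $\Delta(\varepsilon):=\inf\{D(A): A\subseteq[0,1) \text{ measurable},\ \lambda(A)=\varepsilon\}$. *)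

From HB Require Import structures.
From mathcomp Require Import all_boot all_order all_algebra.
From mathcomp Require Import all_classical all_reals all_analysis.
Set Implicit Arguments. Unset Strict Implicit. Unset Printing Implicit Defensive.
Import Order.TTheory GRing.Theory Num.Theory.

Local Open Scope classical_set_scope.
Local Open Scope ring_scope.

(* Since all elements are natural numbers, sums are naturals, so it
   suffices to quantify over m : nat (for negative m there are no pairs). *)
Definition Bstar_set (g n : nat) (S : {set 'I_n.+1}) : bool :=
  [forall m : 'I_(2 * n).+1,
     #|[set p : 'I_n.+1 * 'I_n.+1 |
          [&& p.1 \in S, p.2 \in S & (p.1 + p.2 == m)%N]]| <= g]%N.

Definition Rgn (g n : nat) : nat :=
  \max_(S : {set 'I_n.+1} | (ord0 \notin S) && Bstar_set g S) #|S|.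

(* The real line equipped with the Lebesgue (completed) sigma-algebra. *)
Definition Leb (R : realType) := caratheodory_type ((@wlength R idfun)^*)%mu.

Definition lambda (R : realType) : set (Leb R) -> \bar R :=
  @completed_lebesgue_measure R.

Definition symmetric_set (R : realType) (C : set R) : Prop :=
  exists c : R, forall x : R, C (c + x) <-> C (c - x).

Definition Dsym (R : realType) (A : set (Leb R)) : \bar R :=
  ereal_sup [set lambda C | C in
    [set C : set (Leb R) | [/\ C `<=` A, measurable C & symmetric_set C]]].

Definition Delta (R : realType) (eps : R) : \bar R :=
  ereal_inf [set Dsym A | A in
    [set A : set (Leb R) | [/\ A `<=` `[0, 1[, measurable A &
                               lambda A = eps%:E]]].

(** A B*[g] set S in {1, ..., n} becomes, at scale L with nL < 1, the union A of the cells
    [(x-1)L, xL), x in S: a subset of [0,1) of measure |S|L.  If C is a symmetric subset of A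
    with centre c, write 2c = (m + f)L with m an integer and 0 <= f < 1.  A point y of C in
    cell x is paired with 2c - y in some cell x' of S, and x + x' is m + 2 or m + 1 according
    as y lies in the first fraction f of its cell or not.  As at most g elements of S are a
    summand of a given integer, lambda(C) <= g f L + g (1-f) L = gL.  Hence
    delta (|S|L)^2 <= Delta(|S|L) <= gL, i.e. delta |S|^2 <= g/L, and letting L tend to 1/n
    gives delta |S|^2 <= gn. *)

From HB Require Import structures.
From mathcomp Require Import all_boot all_order all_algebra.
From mathcomp Require Import all_classical all_reals all_analysis.
From mathcomp Require Import zify ring lra.
Import Order.TTheory GRing.Theory Num.Theory.
Local Open Scope classical_set_scope.
Local Open Scope ring_scope.

Section content_bigsetU.
Context d (T : ringOfSetsType d) (R : realFieldType).
Variable mu : {content set T -> \bar R}.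

Lemma content_bigsetU_le_card (I : finType) (P : pred I) (F : I -> set T) (w : R) :
  (forall i, measurable (F i)) -> (forall i, (mu (F i) <= w%:E)%E) ->
  (mu (\big[setU/set0]_(i | P i) F i) <= (#|P|%:R * w)%:E)%E.
Proof.
move=> mF muF.
have [_ le_sum] : measurable (\big[setU/set0]_(i | P i) F i) /\
    (mu (\big[setU/set0]_(i | P i) F i) <= \sum_(i | P i) mu (F i))%E.
  elim/big_rec2: _ => [|i s U _ [mU leU]]; first by rewrite measure0.
  split; first exact: measurableU.
  exact: le_trans (measureU2 mu (mF i) mU) (leeD (lexx _) leU).
apply: (le_trans le_sum); rewrite mulr_natl -sumr_const -sumEFin.
exact: lee_sum.
Qed.

End content_bigsetU.

Lemma bigsetU_finP (T : Type) (I : finType) (A : {set I}) (F : I -> set T) y :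
  (\big[setU/set0]_(i in A) F i) y <-> exists2 i, i \in A & F i y.
Proof.
rewrite -bigcup_seq_cond; split=> [[i /andP[_ iA] Fy]|[i iA Fy]]; first by exists i.
by exists i => //=; rewrite mem_index_enum.
Qed.

Lemma int_eq_of_lt_add1 (R : numDomainType) (a : nat) (m : int) :
  (a%:R : R) < m%:~R + 1 -> m%:~R < (a%:R : R) + 1 -> a%:Z = m.
Proof.
rewrite -[a%:R]/((a%:Z)%:~R : R) -[1 : R]/((1 : int)%:~R) -!intrD !ltr_int.
lia.
Qed.

Lemma sqr_bound_sqrt (R : rcfType) (d k a : R) :
  0 < d -> 0 <= k -> d * k ^+ 2 <= a -> k <= (Num.sqrt d)^-1 * Num.sqrt a.
Proof.
move=> d_gt0 k_ge0 dka; have sd_gt0 : 0 < Num.sqrt d by rewrite sqrtr_gt0.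
have a_ge0 : 0 <= a by apply: le_trans dka; rewrite mulr_ge0 ?sqr_ge0 // ltW.
rewrite -(ler_pM2l sd_gt0) mulrA mulfV ?gt_eqF // mul1r.
by rewrite -(ger0_norm k_ge0) -sqrtr_sqr -sqrtrM ?(ltW d_gt0) // ler_sqrt.
Qed.

Section lebesgue_intervals.
Variable R : realType.

Let lambda_itv (i : interval R) : lambda ([set` i] : set (Leb R)) =
  (if (i.1 < i.2)%E then (i.2 : \bar R) - i.1 else 0)%E.
Proof. exact: lebesgue_measure_itv. Qed.

Lemma measurable_Leb_itv (i : interval R) : measurable ([set` i] : set (Leb R)).
Proof. by apply: sub_caratheodory; exact: measurable_itv. Qed.

Lemma lambda_itv_le (b1 b2 : bool) (a b w : R) : 0 <= w -> b - a <= w ->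
  (lambda ([set` Interval (BSide b1 a) (BSide b2 b)] : set (Leb R)) <= w%:E)%E.
Proof. by move=> w0 baw; rewrite lambda_itv /=; case: ifP; rewrite lee_fin. Qed.

Lemma lambda_itv_co (a b : R) : a <= b -> lambda (`[a, b[ : set (Leb R)) = (b - a)%:E.
Proof.
move=> ab; rewrite lambda_itv /= lte_fin.
by case: ltgtP ab => // ->; rewrite subrr.
Qed.

End lebesgue_intervals.

Definition summands {n} (S : {set 'I_n.+1}) (m : int) : {set 'I_n.+1} :=
  [set x in S | [exists y in S, ((x + y)%N)%:Z == m]].

Lemma card_summands_le g n (S : {set 'I_n.+1}) m :
  Bstar_set g S -> (#|summands S m| <= g)%N.
Proof.
move=> BS; have [->|[x]] := set_0Vmem (summands S m); first by rewrite cards0.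
rewrite inE => /andP[xS /existsP[y /andP[yS /eqP xy_m]]].
have xy_lt : (x + y < (2 * n).+1)%N by have := ltn_ord x; have := ltn_ord y; lia.
apply: leq_trans (forallP BS (Ordinal xy_lt)).
apply: leq_trans (leq_imset_card fst _); apply/subset_leq_card/fintype.subsetP => z.
rewrite inE => /andP[zS /existsP[w /andP[wS /eqP zw_m]]].
apply/imsetP; exists (z, w) => //.
by rewrite inE /= zS wS /=; apply/eqP; move: zw_m; rewrite -xy_m => -[].
Qed.

Section cells.
Variables (R : realType) (L : R).

Definition cell (x : nat) : set (Leb R) := `[(x%:R - 1) * L, x%:R * L[.

Definition cell_head (f : R) (x : nat) : set (Leb R) :=
  `[(x%:R - 1) * L, (x%:R - 1 + f) * L].

Definition cell_tail (f : R) (x : nat) : set (Leb R) :=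
  `](x%:R - 1 + f) * L, x%:R * L[.

Definition cells {n} (S : {set 'I_n.+1}) : set (Leb R) :=
  \big[setU/set0]_(x in S) cell x.

Hypothesis L_gt0 : 0 < L.

Lemma cell_index_eq (x x' : nat) y : cell x y -> cell x' y -> x = x'.
Proof.
rewrite /cell /= !in_itv /= => /andP[xy1 xy2] /andP[x'y1 x'y2].
have : (x%:R : R) < x'%:R + 1 by nra.
have : (x'%:R : R) < x%:R + 1 by nra.
rewrite !natr1 !ltr_nat; lia.
Qed.

Lemma lambda_cells n (S : {set 'I_n.+1}) : lambda (cells S) = (#|S|%:R * L)%:E.
Proof.
rewrite /lambda /cells measure_bigsetU_ord.
- rewrite (eq_bigr (fun=> L%:E)) => [|x _]; first by rewrite sumEFin sumr_const mulr_natl.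
  rewrite -[LHS]/(lambda (cell x)) lambda_itv_co; first by congr _%:E; ring.
  by rewrite ler_pM2r // lerBlDr lerDl.
- by move=> x; exact: measurable_Leb_itv.
- move=> i j _ _ [y [/cell_index_eq ij /ij]]; exact: val_inj.
Qed.

Lemma cells_sub_unit n (S : {set 'I_n.+1}) :
  ord0 \notin S -> n%:R * L <= 1 -> cells S `<=` `[0, 1[.
Proof.
move=> S0 nL y /bigsetU_finP [x xS]; rewrite /cell /= !in_itv /= => /andP[xy1 xy2].
have x_ge1 : (1 : R) <= x%:R.
  rewrite ler1n lt0n; apply: contraNN S0 => /eqP x0.
  by rewrite (_ : ord0 = x) //; exact: val_inj.
have x_len : (x%:R : R) <= n%:R by rewrite ler_nat -ltnS.
apply/andP; split; nra.
Qed.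

End cells.
Arguments cell {R} L x.
Arguments cell_head {R} L f x.
Arguments cell_tail {R} L f x.
Arguments cells {R} L {n} S.

Section symmetric_subsets_of_cells.
Variables (R : realType) (L : R).
Hypothesis L_gt0 : 0 < L.

Lemma cell_index_sum {f : R} {m : int} {x x' : nat} {y y' : R} : 0 <= f < 1 ->
  y + y' = (m%:~R + f) * L -> cell L x y -> cell L x' y' ->
  (x + x')%:Z = (if y <= (x%:R - 1 + f) * L then m + 2 else m + 1).
Proof.
move=> /andP[f0 f1] yy'; rewrite /cell /= !in_itv /= => /andP[xy1 xy2] /andP[x'y1 x'y2].
by case: lerP => yf; apply: int_eq_of_lt_add1; rewrite natrD intrD; nra.
Qed.

Variables (g n : nat) (S : {set 'I_n.+1}).

Lemma symmetric_sub_cells_cover (C : set (Leb R)) (c f : R) (m : int) :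
  0 <= f < 1 -> 2 * c = (m%:~R + f) * L ->
  (forall x, C (c + x) <-> C (c - x)) -> C `<=` cells L S ->
  C `<=` \big[setU/set0]_(x in summands S (m + 2)) cell_head L f x
      `|` \big[setU/set0]_(x in summands S (m + 1)) cell_tail L f x.
Proof.
move=> f01 cE symC CS y Cy.
have /CS /bigsetU_finP [x xS xy] := Cy.
have /CS /bigsetU_finP [x' x'S x'y] : C (2 * c - y).
  have -> : 2 * c - y = c - (y - c) by ring.
  by apply/(symC (y - c)).1; rewrite addrC subrK.
have sum_y : y + (2 * c - y) = (m%:~R + f) * L by rewrite addrC subrK.
have xx' := cell_index_sum f01 sum_y xy x'y.
have summand_x k : (x + x')%:Z = k -> x \in summands S k.
  by move=> <-; rewrite inE xS /=; apply/existsP; exists x'; rewrite x'S /=.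
move: xy; rewrite /cell /= in_itv /= => /andP[xy1 xy2].
case: lerP xx' => yf /summand_x xS'; [left|right]; apply/bigsetU_finP; exists x => //=.
- by rewrite /cell_head /= in_itv /= xy1 yf.
- by rewrite /cell_tail /= in_itv /= yf xy2.
Qed.

Hypothesis BS : Bstar_set g S.

Lemma lambda_symmetric_sub_cells (C : set (Leb R)) :
  measurable C -> symmetric_set C -> C `<=` cells L S -> (lambda C <= (g%:R * L)%:E)%E.
Proof.
move=> mC [c symC] CS.
pose m := Num.floor (2 * c / L); pose f := 2 * c / L - m%:~R.
have f01 : 0 <= f < 1.
  by rewrite subr_ge0 floor_le /= ltrBlDl -intrD1 floorD1_gt.
have cE : 2 * c = (m%:~R + f) * L by rewrite /f addrC subrK divfK ?gt_eqF.
have [fL f'L] : 0 <= f * L /\ 0 <= (1 - f) * L.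
  by case/andP: f01 => f0 f1; split; apply: mulr_ge0; rewrite // ?subr_ge0 ltW.
set U1 := \big[setU/set0]_(x in summands S (m + 2)) cell_head L f x.
set U2 := \big[setU/set0]_(x in summands S (m + 1)) cell_tail L f x.
have mU1 : measurable U1 by apply: bigsetU_measurable => x _; exact: measurable_Leb_itv.
have mU2 : measurable U2 by apply: bigsetU_measurable => x _; exact: measurable_Leb_itv.
have lU1 : (lambda U1 <= (#|summands S (m + 2)|%:R * (f * L))%:E)%E.
  apply: content_bigsetU_le_card => x; first exact: measurable_Leb_itv.
  by apply: lambda_itv_le; rewrite // -mulrBl addrAC subrr add0r.
have lU2 : (lambda U2 <= (#|summands S (m + 1)|%:R * ((1 - f) * L))%:E)%E.
  apply: content_bigsetU_le_card => x; first exact: measurable_Leb_itv.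
  by apply: lambda_itv_le; rewrite // -mulrBl ler_pM2r //; lra.
have CU : (lambda C <= lambda (U1 `|` U2))%E.
  apply: (le_measure (@completed_lebesgue_measure R)); rewrite ?inE //.
  - exact: measurableU.
  - exact: (@symmetric_sub_cells_cover C c f m f01 cE symC CS).
apply: (le_trans CU); apply: le_trans (measureU2 _ mU1 mU2) _.
apply: le_trans (leeD lU1 lU2) _.
rewrite -EFinD lee_fin (_ : g%:R * L = g%:R * (f * L) + g%:R * ((1 - f) * L)); last by ring.
by apply: lerD; apply: ler_wpM2r; rewrite // ler_nat card_summands_le.
Qed.

End symmetric_subsets_of_cells.

Section Delta_bounds.
Variables (R : realType) (g n : nat) (S : {set 'I_n.+1}).
Hypotheses (S0 : ord0 \notin S) (BS : Bstar_set g S).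

Lemma card_le_of_ord0_notin : (#|S| <= n)%N.
Proof.
have /subset_leq_card : S \subset [set~ ord0]%SET.
  by apply/fintype.subsetP => x xS; rewrite !inE; apply: (contraNneq _ S0) => <-.
by rewrite cardsC1 card_ord.
Qed.

Lemma Delta_card_mul_le (L : R) : 0 < L -> n%:R * L <= 1 ->
  (Delta (#|S|%:R * L) <= (g%:R * L)%:E)%E.
Proof.
move=> L_gt0 nL; apply: (@le_trans _ _ (Dsym (cells L S))).
  apply: ereal_inf_lbound; exists (cells L S) => //; split.
  - exact: cells_sub_unit.
  - by apply: bigsetU_measurable => x _; exact: measurable_Leb_itv.
  - exact: lambda_cells.
apply: ge_ereal_sup => _ [C [CS mC symC] <-].
exact: lambda_symmetric_sub_cells CS.
Qed.

Variable delta : R.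
Hypothesis delta_le : (delta%:E <= ereal_inf [set (Delta eps * ((eps ^+ 2)^-1)%R%:E)%E
  | eps in [set x : R | (0 < x < 1)%R]])%E.

Lemma delta_card_sq_mul_le (L : R) : (0 < #|S|)%N -> 0 < L -> n%:R * L < 1 ->
  delta * #|S|%:R ^+ 2 * L <= g%:R.
Proof.
move=> S_gt0 L_gt0 nL; set eps := #|S|%:R * L.
have eps_gt0 : 0 < eps by rewrite mulr_gt0 // ltr0n.
have eps_lt1 : eps < 1.
  by apply: le_lt_trans nL; rewrite ler_pM2r // ler_nat card_le_of_ord0_notin.
have : (delta%:E <= (g%:R * L)%:E * ((eps ^+ 2)^-1)%:E)%E.
  apply: le_trans _ (lee_wpmul2r _ (Delta_card_mul_le L L_gt0 (ltW nL))).
  - by apply: (le_trans delta_le); apply: ereal_inf_lbound; exists eps => //=; rewrite eps_gt0.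
  - by rewrite lee_fin invr_ge0 sqr_ge0.
rewrite -EFinM lee_fin ler_pdivlMr ?exprn_gt0 // => delta_eps.
rewrite -(ler_pM2r L_gt0).
by have -> : delta * #|S|%:R ^+ 2 * L * L = delta * eps ^+ 2 by rewrite /eps; ring.
Qed.

Lemma delta_card_sq_le : (1 <= g)%N -> delta * #|S|%:R ^+ 2 <= g%:R * n%:R.
Proof.
move=> g_ge1; have [->|S_gt0] := posnP #|S|; first by rewrite expr0n mulr0.
apply/ler_addgt0Pr => e e_gt0; set z := g%:R * n%:R + e.
have gn_lt_z : g%:R * n%:R < z by rewrite ltrDl.
have z_gt0 : 0 < z by rewrite ltr_wpDl // mulr_ge0.
have g_gt0 : (0 : R) < g%:R by rewrite ltr0n.
have nL : n%:R * (g%:R / z) < 1 by rewrite mulrA ltr_pdivrMr // mul1r mulrC.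
have := delta_card_sq_mul_le (g%:R / z) S_gt0 (divr_gt0 g_gt0 z_gt0) nL.
by rewrite mulrA ler_pdivrMr // [leLHS]mulrC ler_pM2l.
Qed.

End Delta_bounds.

Theorem corollary3p2 (R : realType) (delta : R) :
  0 < delta ->
  (delta%:E <= ereal_inf [set (Delta eps * ((eps ^+ 2)^-1)%R%:E)%E | eps in [set x : R | (0 < x < 1)%R]])%E ->
  forall g n : nat, (1 <= g)%N -> (g <= n)%N ->
    (Rgn g n)%:R <= (Num.sqrt delta)^-1 * Num.sqrt (g%:R * n%:R).
Proof.
move=> delta_gt0 delta_le g n g_ge1 _.
rewrite /Rgn; apply: (big_ind (fun k : nat => k%:R <= _)).
- by rewrite mulr_ge0 ?invr_ge0 ?sqrtr_ge0.
- by move=> x y; rewrite /maxn; case: ifP.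
move=> S /andP[S0 BS]; apply: sqr_bound_sqrt => //.
exact: delta_card_sq_le.
Qed.
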